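(* Let $\alpha_1,\alpha_2>0$ with $\alpha_1\neq\alpha_2$. Then $x=\tfrac12$ is the unique solution in $(0,1)$ of $F_{\alpha_1}(x)=F_{\alpha_2}(x)$.
   Context: For $\alpha>0$, $F_\alpha(t)=\int_0^t\frac{[x(1-x)]^{\alpha-1}}{B(\alpha,\alpha)}dx$ is the distribution function of the symmetric Beta$(\alpha,\alpha)$ law, $B$ being the Beta function. *)

From Stdlib Require Import Reals.
From Coquelicot Require Import Coquelicot.
Open Scope R_scope.

Definition beta_kernel (alpha x : R) : R := Rpower (x * (1 - x)) (alpha - 1).

(* Beta function B(alpha,alpha) = int_0^1 [x(1-x)]^(alpha-1) dx
   (improper at both endpoints when alpha < 1). *)
Definition Beta_sym (alpha : R) : R :=
  RInt_gen (beta_kernel alpha) (at_right 0) (at_left 1).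

Definition F (alpha t : R) : R :=
  RInt_gen (fun x => beta_kernel alpha x / Beta_sym alpha) (at_right 0) (at_point t).

From Stdlib Require Import Reals Lra Classical.
From Coquelicot Require Import Coquelicot.
Open Scope R_scope.

(* Write k_a(x) = [x(1-x)]^(a-1) for the Beta(a,a) kernel and
   I_a(s) = int_s^{1/2} k_a for its mass between s and the centre 1/2.

   1. k_a is positive, continuous on (0,1) and symmetric about 1/2.  I_a is
      nonincreasing and, as k_a(y) <= C y^(a-1) near 0, bounded when a > 0;
      so I_a(s) increases to a finite limit as s -> 0+.
   2. Turning this limit into improper integrals (the upper half by the
      reflection x |-> 1-x) shows that the limit is B(a,a)/2 and that
      F_a(t) = 1/2 + int_{1/2}^t k_a / B(a,a) for 0 < t < 1; so F_a(1/2) = 1/2.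
   3. A single-crossing lemma: if g/f is strictly increasing on (0,b], then
      the normalised mass of [y,b] is strictly larger for g than for f.  With
      f = k_{a1}, g = k_{a2} and a1 < a2 the ratio is [x(1-x)]^(a2-a1).
   4. By step 2, F_{a1}(x) = F_{a2}(x) says that these normalised masses agree
      (for x > 1/2 after reflection), which by step 3 forces x = 1/2. *)

Lemma ball_R_iff (x e y : R) : ball x e y <-> x - e < y < x + e.
Proof.
  unfold ball; simpl. unfold AbsRing_ball, abs, minus, plus, opp; simpl.
  split; intros H; [apply Rabs_def2 in H | apply Rabs_def1]; lra.
Qed.

Lemma Rpower_continuous (c x : R) : 0 < x -> continuous (fun y => Rpower y c) x.
Proof.
  intros Hx. apply (ex_derive_continuous (fun y => Rpower y c)).
  exists (c * Rpower x (c - 1)). apply is_derive_Reals. now apply derivable_pt_lim_power.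
Qed.

(* Real powers of any base are positive (Rpower x c is exp (c ln x)). *)
Lemma Rpower_pos (x c : R) : 0 < Rpower x c.
Proof. apply exp_pos. Qed.

Lemma Rpower_le_nonpos_exponent (a b c : R) :
  0 < a -> a <= b -> c <= 0 -> Rpower b c <= Rpower a c.
Proof.
  intros Ha Hab Hc. unfold Rpower.
  assert (Hln : c * ln b <= c * ln a) by (assert (ln a <= ln b) by (apply ln_le; lra); nra).
  destruct Hln as [Hlt | ->]; [left; now apply exp_increasing | lra].
Qed.

Lemma Rdiv_lt_cross (p q u v : R) : 0 < q -> 0 < v -> p / q < u / v -> v * p < u * q.
Proof.
  intros Hq Hv H. apply (Rmult_lt_compat_r (q * v)) in H; [| nra].
  replace (p / q * (q * v)) with (v * p) in H by (field; lra).
  replace (u / v * (q * v)) with (u * q) in H by (field; lra). exact H.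
Qed.

Lemma ex_RInt_continuous_on (h : R -> R) (c d s t : R) :
  (forall z, c < z <= d -> continuous h z) -> c < s <= d -> c < t <= d -> ex_RInt h s t.
Proof.
  intros Hh Hs Ht. apply (ex_RInt_continuous (V:=R_CompleteNormedModule)).
  intros z Hz. apply Hh. split.
  - apply Rlt_le_trans with (Rmin s t); [apply Rmin_case|]; lra.
  - apply Rle_trans with (Rmax s t); [|apply Rmax_case]; lra.
Qed.

Lemma RInt_lt_weighted (p q : R -> R) (u v s t : R) : s < t ->
  (forall x, s <= x <= t -> continuous p x) -> (forall x, s <= x <= t -> continuous q x) ->
  (forall x, s < x < t -> u * p x < v * q x) -> u * RInt p s t < v * RInt q s t.
Proof.
  intros Hst Hp Hq Hlt.
  assert (Hex : forall h : R -> R, (forall x, s <= x <= t -> continuous h x) -> ex_RInt h s t).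
  { intros h Hh. apply (ex_RInt_continuous (V:=R_CompleteNormedModule)). intros z Hz.
    rewrite Rmin_left, Rmax_right in Hz by lra. now apply Hh. }
  replace (u * RInt p s t) with (RInt (fun x => u * p x) s t)
    by exact (RInt_scal (V:=R_CompleteNormedModule) p s t u (Hex p Hp)).
  replace (v * RInt q s t) with (RInt (fun x => v * q x) s t)
    by exact (RInt_scal (V:=R_CompleteNormedModule) q s t v (Hex q Hq)).
  apply RInt_lt; [exact Hst | | | exact Hlt]; intros x Hx.
  - apply (continuous_mult (fun _ => v) q); [apply continuous_const | auto].
  - apply (continuous_mult (fun _ => u) p); [apply continuous_const | auto].
Qed.

Lemma limit_le_of_le (h : R -> R) (c l d : R) : 0 < d ->
  (forall s, 0 < s < d -> h s <= c) -> filterlim h (at_right 0) (locally l) -> l <= c.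
Proof.
  intros Hd Hle Hlim.
  apply (filterlim_le (F := at_right 0) h (fun _ => c) l c); [| exact Hlim | apply filterlim_const].
  exists (mkposreal d Hd). intros s Hs Hpos. apply ball_R_iff in Hs. simpl in Hs. apply Hle. lra.
Qed.

Lemma nonincreasing_limit_at_0 (h : R -> R) (b M : R) : 0 < b ->
  (forall s t, 0 < s <= t -> t <= b -> h t <= h s) ->
  (forall s, 0 < s <= b -> h s <= M) ->
  exists L, (forall s, 0 < s <= b -> h s <= L) /\ filterlim h (at_right 0) (locally L).
Proof.
  intros Hb Hmono HM.
  set (E := fun v => exists s, 0 < s <= b /\ v = h s).
  assert (HE : bound E) by (exists M; intros v [s [Hs ->]]; now apply HM).
  assert (Hne : exists v, E v) by (exists (h b), b; split; [lra | reflexivity]).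
  destruct (completeness E HE Hne) as [L [Hub Hlub]].
  assert (Hbound : forall s, 0 < s <= b -> h s <= L) by (intros s Hs; apply Hub; now exists s).
  exists L. split; [exact Hbound |].
  apply filterlim_locally. intros eps.
  assert (Hnear : exists s0, 0 < s0 <= b /\ L - eps < h s0).
  { apply NNPP. intros Hno.
    assert (L <= L - eps); [| pose proof (cond_pos eps); lra].
    apply Hlub. intros v [s [Hs ->]]. apply Rnot_lt_le. intros Hlt. apply Hno. now exists s. }
  destruct Hnear as [s0 [Hs0 Hlt]].
  exists (mkposreal s0 (proj1 Hs0)). intros s Hs Hpos. apply ball_R_iff in Hs. simpl in Hs.
  apply ball_R_iff. pose proof (Hmono s s0 ltac:(lra) ltac:(lra)). pose proof (Hbound s ltac:(lra)).
  pose proof (cond_pos eps). lra.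
Qed.

Lemma is_RInt_gen_lower_limit (f : R -> R) (Fa : (R -> Prop) -> Prop) {FFa : Filter Fa}
  (b L : R) :
  Fa (fun s => ex_RInt f s b) -> filterlim (fun s => RInt f s b) Fa (locally L) ->
  is_RInt_gen f Fa (at_point b) L.
Proof.
  intros Hex Hlim. apply (filterlimi_lim_ext_loc (fun ab => RInt f (fst ab) (snd ab))).
  - apply (Filter_prod _ _ _ _ (fun t => t = b) Hex); [reflexivity |].
    intros s t Hs ->. now apply (RInt_correct (V:=R_CompleteNormedModule)).
  - apply (filterlim_ext_loc (fun ab => RInt f (fst ab) b)).
    + apply (Filter_prod _ _ _ (fun _ => True) (fun t => t = b)); [apply filter_true | reflexivity |].
      now intros s t _ ->.
    + exact (filterlim_comp _ _ _ fst (fun s => RInt f s b) _ _ _ filterlim_fst Hlim).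
Qed.

Lemma is_RInt_gen_upper_limit (f : R -> R) (Fb : (R -> Prop) -> Prop) {FFb : Filter Fb}
  (a L : R) :
  Fb (fun t => ex_RInt f a t) -> filterlim (fun t => RInt f a t) Fb (locally L) ->
  is_RInt_gen f (at_point a) Fb L.
Proof.
  intros Hex Hlim. apply (filterlimi_lim_ext_loc (fun ab => RInt f (fst ab) (snd ab))).
  - apply (Filter_prod _ _ _ (fun s => s = a) _ (eq_refl a) Hex).
    intros s t -> Ht. now apply (RInt_correct (V:=R_CompleteNormedModule)).
  - apply (filterlim_ext_loc (fun ab => RInt f a (snd ab))).
    + apply (Filter_prod _ _ _ (fun s => s = a) (fun _ => True)); [reflexivity | apply filter_true |].
      now intros s t -> _.
    + exact (filterlim_comp _ _ _ snd (fun t => RInt f a t) _ _ _ filterlim_snd Hlim).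
Qed.

Lemma filterlim_reflect_at_left_1 : filterlim (fun t => 1 - t) (at_left 1) (at_right 0).
Proof.
  intros P [eps HP]. exists eps. intros t Ht Hlt. apply HP; [| lra].
  apply ball_R_iff in Ht. apply ball_R_iff. lra.
Qed.

Lemma beta_kernel_pos (a x : R) : 0 < beta_kernel a x.
Proof. apply Rpower_pos. Qed.

Lemma beta_kernel_continuous (a x : R) : 0 < x < 1 -> continuous (beta_kernel a) x.
Proof.
  intros Hx. apply (continuous_comp (fun x => x * (1 - x)) (fun y => Rpower y (a - 1))).
  - apply (ex_derive_continuous (fun x => x * (1 - x))). auto_derive. auto.
  - apply Rpower_continuous. nra.
Qed.

Lemma beta_kernel_sym (a x : R) : beta_kernel a (1 - x) = beta_kernel a x.
Proof. unfold beta_kernel. f_equal. ring. Qed.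

Lemma beta_kernel_ex_RInt (a s t : R) :
  0 < s < 1 -> 0 < t < 1 -> ex_RInt (beta_kernel a) s t.
Proof.
  intros Hs Ht. apply (ex_RInt_continuous_on _ 0 (Rmax s t)).
  - intros z Hz. apply beta_kernel_continuous. split; [lra |].
    apply Rle_lt_trans with (Rmax s t); [lra | apply Rmax_case; lra].
  - split; [lra | apply Rmax_l].
  - split; [lra | apply Rmax_r].
Qed.

Lemma beta_kernel_RInt_pos (a s t : R) : 0 < s < t -> t < 1 -> 0 < RInt (beta_kernel a) s t.
Proof.
  intros Hs Ht.
  assert (H : RInt (fun _ => 0) s t < RInt (beta_kernel a) s t).
  { apply RInt_lt; try lra.
    - intros x Hx. apply beta_kernel_continuous. lra.
    - intros x Hx. apply continuous_const.
    - intros x Hx. apply beta_kernel_pos. }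
  rewrite RInt_const in H. unfold scal in H; simpl in H. unfold mult in H; simpl in H. lra.
Qed.

Lemma beta_kernel_dominated (a y : R) : 0 < y <= 1/2 ->
  beta_kernel a y <= (1 + Rpower (/2) (a - 1)) * Rpower y (a - 1).
Proof.
  intros Hy. unfold beta_kernel.
  pose proof (Rpower_pos (/2) (a - 1)). pose proof (Rpower_pos y (a - 1)).
  destruct (Rle_or_lt 0 (a - 1)) as [Ha | Ha].
  - (* nonnegative exponent: y(1-y) <= y *)
    assert (Rpower (y * (1 - y)) (a - 1) <= Rpower y (a - 1))
      by (apply Rle_Rpower_l; [lra | nra]).
    nra.
  - (* negative exponent: y(1-y) >= y/2 *)
    assert (Hle : Rpower (y * (1 - y)) (a - 1) <= Rpower (y * /2) (a - 1))
      by (apply Rpower_le_nonpos_exponent; nra).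
    rewrite <- (Rpower_mult_distr y (/2)) in Hle by lra.
    nra.
Qed.

Definition half_mass (a s : R) : R := RInt (beta_kernel a) s (1/2).

Lemma half_mass_Chasles (a s t : R) : 0 < s < 1 -> 0 < t < 1 ->
  half_mass a s = RInt (beta_kernel a) s t + half_mass a t.
Proof.
  intros Hs Ht. unfold half_mass.
  rewrite <- (RInt_Chasles (V:=R_CompleteNormedModule) _ s t (1/2)); [reflexivity| |];
    apply beta_kernel_ex_RInt; lra.
Qed.

Lemma half_mass_nonincreasing (a s t : R) : 0 < s <= t -> t <= 1/2 ->
  half_mass a t <= half_mass a s.
Proof.
  intros Hs Ht. rewrite (half_mass_Chasles a s t) by lra.
  destruct (proj2 Hs) as [Hlt | <-].
  - pose proof (beta_kernel_RInt_pos a s t). lra.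
  - rewrite RInt_point. simpl. unfold zero; simpl. lra.
Qed.

(* Integrating the domination bound: int_s^{1/2} k_a <= C/a (1/2)^a for a > 0. *)
Lemma half_mass_bounded (a : R) : 0 < a ->
  exists M, forall s, 0 < s <= 1/2 -> half_mass a s <= M.
Proof.
  intros Ha. set (C := 1 + Rpower (/2) (a - 1)).
  assert (HC : 0 < C / a)
    by (unfold C; pose proof (Rpower_pos (/2) (a - 1)); apply Rdiv_lt_0_compat; lra).
  exists (C / a * Rpower (1/2) a). intros s Hs.
  assert (Hprim : is_RInt (fun y => C * Rpower y (a - 1)) s (1/2)
                    (minus (C / a * Rpower (1/2) a) (C / a * Rpower s a))).
  { apply (is_RInt_derive (fun y => C / a * Rpower y a)); intros x Hx;
      rewrite Rmin_left in Hx by lra.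
    - apply is_derive_Reals.
      replace (C * Rpower x (a - 1)) with (C / a * (a * Rpower x (a - 1))) by (field; lra).
      apply derivable_pt_lim_scal, derivable_pt_lim_power. lra.
    - apply (continuous_mult (fun _ => C)); [apply continuous_const | apply Rpower_continuous; lra]. }
  apply Rle_trans with (RInt (fun y => C * Rpower y (a - 1)) s (1/2)).
  - apply RInt_le; try lra.
    + apply beta_kernel_ex_RInt; lra.
    + eexists; eauto.
    + intros x Hx. apply beta_kernel_dominated. lra.
  - rewrite (is_RInt_unique _ _ _ _ Hprim). unfold minus, plus, opp; simpl.
    pose proof (Rpower_pos s a). nra.
Qed.

Lemma half_mass_reflect (a s : R) : 0 < s < 1 ->
  RInt (beta_kernel a) (1/2) (1 - s) = half_mass a s.
Proof.
  intros Hs. unfold half_mass.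
  assert (E := RInt_comp_lin (V:=R_CompleteNormedModule) (beta_kernel a) (-1) 1 (1/2) s).
  replace (-1 * s + 1) with (1 - s) in E by ring.
  replace (-1 * (1/2) + 1) with (1/2) in E by field.
  rewrite <- E by (apply beta_kernel_ex_RInt; lra).
  transitivity (RInt (fun y => scal (-1) (beta_kernel a y)) (1/2) s).
  { apply RInt_ext. intros x _. f_equal.
    replace (-1 * x + 1) with (1 - x) by ring. apply beta_kernel_sym. }
  rewrite (RInt_scal (V:=R_CompleteNormedModule)) by (apply beta_kernel_ex_RInt; lra).
  rewrite <- (opp_RInt_swap (V:=R_CompleteNormedModule)) by (apply beta_kernel_ex_RInt; lra).
  unfold scal, opp; simpl. unfold mult; simpl. ring.
Qed.

Lemma half_mass_limit (a : R) : 0 < a -> exists L, 0 < L /\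
  (forall s, 0 < s <= 1/2 -> half_mass a s <= L) /\
  filterlim (half_mass a) (at_right 0) (locally L).
Proof.
  intros Ha. destruct (half_mass_bounded a Ha) as [M HM].
  destruct (nonincreasing_limit_at_0 (half_mass a) (1/2) M) as [L [Hle Hlim]]; try lra.
  - intros s t Hs Ht. now apply half_mass_nonincreasing.
  - exact HM.
  - exists L. repeat split; [| exact Hle | exact Hlim].
    apply Rlt_le_trans with (half_mass a (1/4)); [apply beta_kernel_RInt_pos; lra | apply Hle; lra].
Qed.

Lemma beta_kernel_lower_half (a L : R) :
  filterlim (half_mass a) (at_right 0) (locally L) ->
  is_RInt_gen (beta_kernel a) (at_right 0) (at_point (1/2)) L.
Proof.
  intros Hlim. refine (is_RInt_gen_lower_limit _ _ _ _ _ Hlim).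
  exists (mkposreal (1/2) ltac:(lra)). intros s Hs Hpos. apply ball_R_iff in Hs. simpl in Hs.
  apply beta_kernel_ex_RInt; lra.
Qed.

(* The upper half, via int_{1/2}^t k_a = I_a(1-t). *)
Lemma beta_kernel_upper_half (a L : R) :
  filterlim (half_mass a) (at_right 0) (locally L) ->
  is_RInt_gen (beta_kernel a) (at_point (1/2)) (at_left 1) L.
Proof.
  intros Hlim.
  assert (Hnear : at_left 1 (fun t => 1/2 < t < 1)).
  { exists (mkposreal (1/2) ltac:(lra)). intros t Ht Hlt. apply ball_R_iff in Ht. simpl in Ht. lra. }
  apply (is_RInt_gen_upper_limit (beta_kernel a) (at_left 1)).
  - refine (filter_imp _ _ _ Hnear).
    intros t Ht. apply beta_kernel_ex_RInt; lra.
  - apply (filterlim_ext_loc (fun t => half_mass a (1 - t))).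
    + refine (filter_imp _ _ _ Hnear).
      intros t Ht. rewrite <- half_mass_reflect by lra. f_equal. ring.
    + exact (filterlim_comp _ _ _ _ _ _ _ _ filterlim_reflect_at_left_1 Hlim).
Qed.

Lemma Beta_sym_twice_half (a L : R) :
  filterlim (half_mass a) (at_right 0) (locally L) -> Beta_sym a = 2 * L.
Proof.
  intros Hlim. unfold Beta_sym.
  rewrite (is_RInt_gen_unique _ _ (is_RInt_gen_Chasles _ (1/2) L L
             (beta_kernel_lower_half a L Hlim) (beta_kernel_upper_half a L Hlim))).
  unfold plus; simpl. ring.
Qed.

Lemma half_mass_limit_Beta (a : R) : 0 < a -> 0 < Beta_sym a /\
  (forall s, 0 < s <= 1/2 -> half_mass a s <= Beta_sym a / 2) /\
  filterlim (half_mass a) (at_right 0) (locally (Beta_sym a / 2)).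
Proof.
  intros Ha. destruct (half_mass_limit a Ha) as [L [HL [Hle Hlim]]].
  rewrite (Beta_sym_twice_half a L Hlim). replace (2 * L / 2) with L by field.
  repeat split; [lra | exact Hle | exact Hlim].
Qed.

Lemma F_centered (a t : R) : 0 < a -> 0 < t < 1 ->
  F a t = 1/2 + RInt (beta_kernel a) (1/2) t / Beta_sym a.
Proof.
  intros Ha Ht. destruct (half_mass_limit_Beta a Ha) as [HB [_ Hlim]].
  assert (Hcentre : is_RInt_gen (beta_kernel a) (at_point (1/2)) (at_point t)
                      (RInt (beta_kernel a) (1/2) t)).
  { apply is_RInt_gen_at_point, (RInt_correct (V:=R_CompleteNormedModule)).
    apply beta_kernel_ex_RInt; lra. }
  assert (H := is_RInt_gen_Chasles _ (1/2) _ _ (beta_kernel_lower_half a _ Hlim) Hcentre).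
  apply (is_RInt_gen_scal _ (/ Beta_sym a)) in H.
  apply (is_RInt_gen_ext _ (fun x => beta_kernel a x / Beta_sym a)) in H.
  - unfold F. rewrite (is_RInt_gen_unique _ _ H). unfold scal, plus; simpl. unfold mult; simpl.
    field. lra.
  - apply filter_forall. intros ab x _. unfold scal; simpl. unfold mult; simpl.
    unfold Rdiv. ring.
Qed.

(* Let f > 0 and g be continuous on (0,b] with g/f
   strictly increasing, and let the masses int_s^b f stay below Lf while the
   masses int_s^b g tend to Lg as s -> 0+.  Then, for every y in (0,b), the
   normalised mass of [y,b] is strictly larger for g than for f.  Indeed either
   g/f > Lg/Lf on (y,b), and the claim is immediate; or g/f < Lg/Lf on (0,y),
   and then the excess D(s) of the normalised mass of [s,b] for f over that for
   g strictly decreases as s increases to y, while D(s) has a nonpositive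
   upper limit as s -> 0+. *)
Section SingleCrossing.

Variables (f g : R -> R) (b Lf Lg : R).
Hypothesis f_cont : forall z, 0 < z <= b -> continuous f z.
Hypothesis g_cont : forall z, 0 < z <= b -> continuous g z.
Hypothesis f_pos : forall z, 0 < z <= b -> 0 < f z.
Hypothesis ratio_increasing : forall z w, 0 < z < w -> w <= b -> g z / f z < g w / f w.
Hypothesis Lf_pos : 0 < Lf.
Hypothesis Lg_pos : 0 < Lg.
Hypothesis f_mass_bound : forall s, 0 < s <= b -> RInt f s b <= Lf.
Hypothesis g_mass_limit : filterlim (fun s => RInt g s b) (at_right 0) (locally Lg).

Lemma single_crossing (y : R) : 0 < y < b -> Lg * RInt f y b < Lf * RInt g y b.
Proof.
  intros Hy.
  destruct (Rle_or_lt (g y / f y) (Lg / Lf)) as [Hle | Hgt].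
  - assert (Hbelow : forall z, 0 < z < y -> Lf * g z < Lg * f z).
    { intros z Hz. apply Rdiv_lt_cross; [apply f_pos; lra | lra |].
      pose proof (ratio_increasing z y ltac:(lra) ltac:(lra)). lra. }
    set (D := fun s => Lg * RInt f s b - Lf * RInt g s b).
    assert (Hdecr : forall s t, 0 < s < t -> t <= y -> D t < D s).
    { intros s t Hs Ht. unfold D.
      rewrite <- (RInt_Chasles (V:=R_CompleteNormedModule) f s t b),
              <- (RInt_Chasles (V:=R_CompleteNormedModule) g s t b)
        by (apply (ex_RInt_continuous_on _ 0 b); auto; lra).
      pose proof (RInt_lt_weighted g f Lf Lg s t ltac:(lra)
                    (fun x Hx => g_cont x ltac:(lra)) (fun x Hx => f_cont x ltac:(lra))
                    (fun x Hx => Hbelow x ltac:(lra))).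
      unfold plus; simpl. nra. }
    assert (Hlimit : Lg <= Lg - D (y/2) / Lf).
    { apply (limit_le_of_le (fun s => RInt g s b) _ Lg (y/2)); [lra | | exact g_mass_limit].
      intros s Hs. pose proof (Hdecr s (y/2) ltac:(lra) ltac:(lra)).
      pose proof (f_mass_bound s ltac:(lra)).
      apply Rmult_le_reg_l with Lf; [lra |].
      replace (Lf * (Lg - D (y/2) / Lf)) with (Lf * Lg - D (y/2)) by (field; lra).
      unfold D in *. nra. }
    assert (HD : D (y/2) <= 0)
      by (replace (D (y/2)) with (Lf * (D (y/2) / Lf)) by (field; lra); nra).
    pose proof (Hdecr (y/2) y ltac:(lra) ltac:(lra)). unfold D in *. lra.
  - apply RInt_lt_weighted; [lra | intros x Hx; apply f_cont; lra | intros x Hx; apply g_cont; lra |].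
    intros z Hz. pose proof (ratio_increasing y z ltac:(lra) ltac:(lra)).
    pose proof (Rdiv_lt_cross Lg Lf (g z) (f z) Lf_pos (f_pos z ltac:(lra)) ltac:(lra)). lra.
Qed.

End SingleCrossing.

(* The ratio of two kernels is again a power of x(1-x); for a1 < a2 it is
   strictly increasing on (0,1/2], since x(1-x) is. *)
Lemma beta_kernel_ratio_increasing (a1 a2 : R) : a1 < a2 ->
  forall z w, 0 < z < w -> w <= 1/2 ->
  beta_kernel a2 z / beta_kernel a1 z < beta_kernel a2 w / beta_kernel a1 w.
Proof.
  intros Ha z w Hz Hw.
  assert (Hratio : forall x, beta_kernel a2 x / beta_kernel a1 x = Rpower (x * (1 - x)) (a2 - a1)).
  { intros x. unfold beta_kernel, Rdiv. rewrite <- Rpower_Ropp, <- Rpower_plus. f_equal. ring. }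
  rewrite !Hratio. apply Rlt_Rpower_l; [lra | split; nra].
Qed.

Lemma half_mass_normalised_lt (a1 a2 : R) : 0 < a1 < a2 -> forall y, 0 < y < 1/2 ->
  Beta_sym a2 * half_mass a1 y < Beta_sym a1 * half_mass a2 y.
Proof.
  intros Ha y Hy.
  destruct (half_mass_limit_Beta a1 ltac:(lra)) as [HB1 [Hle1 _]].
  destruct (half_mass_limit_Beta a2 ltac:(lra)) as [HB2 [_ Hlim2]].
  assert (Hcross := single_crossing (beta_kernel a1) (beta_kernel a2) (1/2)
            (Beta_sym a1 / 2) (Beta_sym a2 / 2)
            (fun z Hz => beta_kernel_continuous a1 z ltac:(lra))
            (fun z Hz => beta_kernel_continuous a2 z ltac:(lra))
            (fun z _ => beta_kernel_pos a1 z)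
            (beta_kernel_ratio_increasing a1 a2 (proj2 Ha))
            ltac:(lra) ltac:(lra) Hle1 Hlim2 y Hy).
  unfold half_mass. lra.
Qed.

Lemma F_eq_only_at_centre (a1 a2 : R) : 0 < a1 < a2 ->
  forall x, 0 < x < 1 -> F a1 x = F a2 x -> x = 1/2.
Proof.
  intros Ha x Hx Heq.
  destruct (half_mass_limit_Beta a1 ltac:(lra)) as [HB1 _].
  destruct (half_mass_limit_Beta a2 ltac:(lra)) as [HB2 _].
  rewrite !F_centered in Heq by lra.
  assert (Hcentred : Beta_sym a2 * RInt (beta_kernel a1) (1/2) x
                     = Beta_sym a1 * RInt (beta_kernel a2) (1/2) x).
  { assert (E : RInt (beta_kernel a1) (1/2) x / Beta_sym a1
                 = RInt (beta_kernel a2) (1/2) x / Beta_sym a2) by lra.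
    transitivity (Beta_sym a1 * Beta_sym a2 * (RInt (beta_kernel a1) (1/2) x / Beta_sym a1));
      [field; lra | rewrite E; field; lra]. }
  destruct (Rtotal_order x (1/2)) as [Hlt | [Hc | Hgt]]; [exfalso | exact Hc | exfalso].
  - assert (Hswap : forall a, RInt (beta_kernel a) (1/2) x = - half_mass a x).
    { intros a. unfold half_mass.
      rewrite <- (opp_RInt_swap (V:=R_CompleteNormedModule)) by (apply beta_kernel_ex_RInt; lra).
      reflexivity. }
    rewrite !Hswap in Hcentred.
    pose proof (half_mass_normalised_lt a1 a2 Ha x ltac:(lra)). lra.
  - replace x with (1 - (1 - x)) in Hcentred by ring.
    rewrite !half_mass_reflect in Hcentred by lra.
    pose proof (half_mass_normalised_lt a1 a2 Ha (1 - x) ltac:(lra)). lra.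
Qed.

Theorem proposition3 (a1 a2 : R) (h1 : 0 < a1) (h2 : 0 < a2) (hne : a1 <> a2) :
  0 < 1/2 < 1 /\ F a1 (1/2) = F a2 (1/2) /\
  (forall x : R, 0 < x < 1 -> F a1 x = F a2 x -> x = 1/2).
Proof.
  assert (Hcentre : forall a, 0 < a -> F a (1/2) = 1/2).
  { intros a Ha. rewrite F_centered, RInt_point by lra. simpl. unfold zero; simpl.
    unfold Rdiv. ring. }
  split; [lra | split; [now rewrite !Hcentre |]].
  intros x Hx Heq. destruct (Rtotal_order a1 a2) as [Hlt | [Hsame | Hgt]].
  - exact (F_eq_only_at_centre a1 a2 (conj h1 Hlt) x Hx Heq).
  - contradiction.
  - exact (F_eq_only_at_centre a2 a1 (conj h2 Hgt) x Hx (eq_sym Heq)).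
Qed.
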